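(* Fix a partition $[n]=U\sqcup D$ into up and down indices. A join-irreducible element $\gamma$ of the weak order on $S_n$ avoids both $\bar{2}13$ and $13\underline{2}$ if and only if its associated subset is $A_{k,l}$ for some $1\le k\le l\le n-1$, where $A_{k,k}=[1,k]$ and, for $k<l$, writing $U_{k,l}=U\cap[k+1,l]$: $A_{k,l}=[1,k]\cup U_{k,l}\cup[l+1,n]$ if $k+1,l\in D$; $A_{k,l}=U_{k,l}\cup[l+1,n]$ if $k+1\in U$, $l\in D$; $A_{k,l}=[1,k]\cup U_{k,l}$ if $k+1\in D$, $l\in U$; and $A_{k,l}=U_{k,l}$ if $k+1,l\in U$.
   Context: $S_n$: permutations of $[n]$ in one-line notation $x_1\cdots x_n$; weak order $x\le y$ iff $I(x)\subseteq I(y)$, $I(x)=\{(x_j,x_i):i<j,x_i>x_j\}$. Join-irreducibles (elements covering exactly one element) correspond bijectively to subsets $A\subseteq[n]$ with $\max([n]\setminus A)>\min A$: the permutation lists $[n]\setminus A$ in increasing order followed by $A$ in increasing order; this $A$ is the associated subset. A permutation $x$ contains $\bar{2}13$ if there are $i<j<k$ with $x_j<x_i<x_k$ and $x_i\in U$; contains $13\underline{2}$ if there are $i<j<k$ with $x_i<x_k<x_j$ and $x_k\in D$; otherwise it avoids the pattern. *)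

From mathcomp Require Import all_boot.
Set Implicit Arguments. Unset Strict Implicit. Unset Printing Implicit Defensive.

(* A permutation of [n] in one-line notation: a sequence x_1 ... x_n that is a
   rearrangement of 1,...,n.  x_i is [nth 0 x (i-1)]. *)
Definition is_perm (n : nat) (x : seq nat) : bool := perm_eq x (iota 1 n).

Definition inv_set (x : seq nat) (p : nat * nat) : Prop :=
  exists i j, [/\ i < j, j < size x, nth 0 x i > nth 0 x j &
                  p = (nth 0 x j, nth 0 x i)].

Definition weak_le (x y : seq nat) : Prop := forall p, inv_set x p -> inv_set y p.
Definition weak_lt (x y : seq nat) : Prop := weak_le x y /\ x <> y.

Definition covers (n : nat) (y x : seq nat) : Prop :=
  [/\ is_perm n x, is_perm n y, weak_lt x y &
      forall z, is_perm n z -> weak_lt x z -> weak_lt z y -> False].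

Definition join_irreducible (n : nat) (g : seq nat) : Prop :=
  is_perm n g /\ exists y, covers n g y /\ forall z, covers n g z -> z = y.

(* Subsets of [n] are boolean predicates on nat (only values in [n] matter). *)
Definition jperm (n : nat) (A : pred nat) : seq nat :=
  [seq v <- iota 1 n | ~~ A v] ++ [seq v <- iota 1 n | A v].

(* max([n]\A) > min A  (both sets nonempty). *)
Definition valid_subset (n : nat) (A : pred nat) : Prop :=
  exists a b, [/\ 1 <= a <= n, 1 <= b <= n, A a, ~~ A b & a < b].

Definition assoc_subset (n : nat) (g : seq nat) (A : pred nat) : Prop :=
  valid_subset n A /\ g = jperm n A.

(* Pattern containment; U = up indices, D = [n] \ U = down indices. *)
Definition contains_bar213 (U : pred nat) (x : seq nat) : Prop :=
  exists i j k, [/\ i < j, j < k, k < size x,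
    nth 0 x j < nth 0 x i < nth 0 x k & U (nth 0 x i)].

Definition contains_13under2 (U : pred nat) (x : seq nat) : Prop :=
  exists i j k, [/\ i < j, j < k, k < size x,
    nth 0 x i < nth 0 x k < nth 0 x j & ~~ U (nth 0 x k)].

Definition Ukl (U : pred nat) (k l : nat) : pred nat :=
  fun i => U i && (k < i <= l).

Definition Akl (n : nat) (U : pred nat) (k l : nat) : pred nat :=
  fun i =>
    if k == l then 1 <= i <= k
    else if ~~ U k.+1 && ~~ U l then [|| 1 <= i <= k, Ukl U k l i | l < i <= n]
    else if U k.+1 && ~~ U l then Ukl U k l i || (l < i <= n)
    else if ~~ U k.+1 && U l then (1 <= i <= k) || Ukl U k l i
    else Ukl U k l i.

From mathcomp Require Import all_boot zify.
From Stdlib Require Import Classical_Prop.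
Set Implicit Arguments. Unset Strict Implicit. Unset Printing Implicit Defensive.

(* A join-irreducible permutation g has exactly one descent: swapping the entries of
   any descent gives a lower cover, distinct descents give distinct covers, and a
   permutation without descent covers nothing. So g lists [n] \ A increasingly and then
   A increasingly. Every inversion of such a permutation crosses the two runs, hence g
   contains bar213 or 13under2 exactly when some b lies strictly between two elements
   of [n] on the other side of A, and (b \in A) differs from (b \in U). Forbidding this
   makes A constant up to its first change k + 1, constant after its last change l, and
   equal to U on ]k, l]; when k < l the two constant values are then the complements of U
   at k + 1 and at l, which are the four cases in the definition of A_{k,l}. *)

Section Inversions.

Variable n : nat.

Lemma perm_iota_uniq x : is_perm n x -> uniq x.
Proof. by move/perm_uniq->; apply: iota_uniq. Qed.

Lemma perm_iota_size x : is_perm n x -> size x = n.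
Proof. by move/perm_size->; apply: size_iota. Qed.

Lemma perm_iota_mem x v : is_perm n x -> (v \in x) = (1 <= v <= n).
Proof. by move/perm_mem->; rewrite mem_iota; lia. Qed.

Lemma inv_setE x a b : uniq x ->
  inv_set x (a, b) <-> [/\ a \in x, b \in x, a < b & index b x < index a x].
Proof.
move=> ux; split.
- case=> i [j [ij jx ji [-> ->]]]; have ix := ltn_trans ij jx.
  by rewrite !mem_nth // !index_uniq.
- case=> ax bx ab ba; exists (index b x), (index a x).
  by rewrite !nth_index // index_mem.
Qed.

(* Both x and y are sorted by position in x. *)
Lemma inv_set_inj x y : is_perm n x -> is_perm n y ->
  (forall p, inv_set x p <-> inv_set y p) -> x = y.
Proof.
move=> px py Ixy; have ux := perm_iota_uniq px; have uy := perm_iota_uniq py.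
pose before a b := index a x < index b x.
have before_trans : transitive before by move=> ? ? ?; apply: ltn_trans.
have sorted_before s : uniq s -> {in s &, forall a b, index a s < index b s -> before a b} ->
    sorted before s.
  move=> us hs; rewrite sorted_pairwise //; apply/(pairwiseP 0) => i j /[!inE] hi hj ij.
  by apply: hs; rewrite ?mem_nth ?index_uniq.
apply: (irr_sorted_eq before_trans (fun a => ltnn _)).
- by apply: sorted_before => // a b.
- apply: sorted_before => // a b ay by_ ab_y; rewrite /before.
  have ax : a \in x by rewrite (perm_iota_mem _ px) -(perm_iota_mem _ py).
  have bx : b \in x by rewrite (perm_iota_mem _ px) -(perm_iota_mem _ py).
  case: (ltngtP (index a x)) => // [ba_x | /(index_inj 0 ax bx) eab];
    last by move: ab_y; rewrite eab ltnn.
  case: (ltngtP a b) => [a_b | b_a | eab]; last by move: ab_y; rewrite eab ltnn.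
  + have /Ixy/(inv_setE _ _ uy)[_ _ _] : inv_set x (a, b) by apply/(inv_setE _ _ ux).
    lia.
  + have /Ixy/(inv_setE _ _ ux)[_ _ _] : inv_set y (b, a) by apply/(inv_setE _ _ uy).
    lia.
- by move=> v; rewrite (perm_iota_mem _ px) (perm_iota_mem _ py).
Qed.

End Inversions.

Definition swap_idx d i := if i == d then d.+1 else if i == d.+1 then d else i.

Definition swap_at (g : seq nat) d := mkseq (fun i => nth 0 g (swap_idx d i)) (size g).

Lemma swap_idxK d : involutive (swap_idx d).
Proof. by move=> i; rewrite /swap_idx; do ! case: ifP; lia. Qed.

Lemma swap_idx_lt d m i : d.+1 < m -> i < m -> swap_idx d i < m.
Proof. by rewrite /swap_idx; do ! case: ifP; lia. Qed.

Lemma swap_idx_ltE d i j : i != j -> ~~ ((i == d) && (j == d.+1)) ->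
  (swap_idx d j < swap_idx d i) = (j < i) && ~~ ((i == d.+1) && (j == d)).
Proof. by rewrite /swap_idx; do ! case: ifP; lia. Qed.

Lemma index_nthE (s : seq nat) v i : uniq s -> i < size s -> v \in s ->
  (index v s == i) = (v == nth 0 s i).
Proof. by move=> us si vs; apply/eqP/eqP => [<- | ->]; rewrite ?nth_index ?index_uniq. Qed.

Section AdjacentSwap.

Variables (g : seq nat) (d : nat).
Hypotheses (dg : d.+1 < size g) (ug : uniq g).

Lemma size_swap_at : size (swap_at g d) = size g.
Proof. exact: size_mkseq. Qed.

Lemma nth_swap_at i : i < size g -> nth 0 (swap_at g d) i = nth 0 g (swap_idx d i).
Proof. exact: nth_mkseq. Qed.

Lemma uniq_swap_at : uniq (swap_at g d).
Proof.
apply/(uniqP 0) => i j /[!inE] /[!size_swap_at] ig jg; rewrite !nth_swap_at //.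
move/(uniqP 0 ug); rewrite !inE !swap_idx_lt // => /(_ isT isT).
by move/(congr1 (swap_idx d)); rewrite !swap_idxK.
Qed.

Lemma index_swap_at v : v \in g -> index v (swap_at g d) = swap_idx d (index v g).
Proof.
move=> vg; have ivg : swap_idx d (index v g) < size g by rewrite swap_idx_lt ?index_mem.
rewrite -{1}(nth_index 0 vg) -{1}(swap_idxK d (index v g)) -nth_swap_at //.
by rewrite index_uniq ?size_swap_at ?uniq_swap_at.
Qed.

Lemma mem_swap_at v : (v \in swap_at g d) = (v \in g).
Proof.
apply/idP/idP => [/(nthP 0)[i] | vg].
  by rewrite size_swap_at => ig <-; rewrite nth_swap_at // mem_nth // swap_idx_lt.
by rewrite -index_mem index_swap_at // size_swap_at swap_idx_lt // index_mem.
Qed.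

Hypothesis desc : nth 0 g d.+1 < nth 0 g d.

Lemma inv_swap_at p :
  inv_set (swap_at g d) p <-> inv_set g p /\ p <> (nth 0 g d.+1, nth 0 g d).
Proof.
case: p => a b; rewrite (inv_setE _ _ uniq_swap_at) (inv_setE _ _ ug) !mem_swap_at.
suff key : a \in g -> b \in g -> a < b -> (index b (swap_at g d) < index a (swap_at g d)) =
    (index b g < index a g) && ((a, b) != (nth 0 g d.+1, nth 0 g d)).
  split => [[ag bg ab] | [[ag bg ab ba] /eqP ne]]; rewrite key //.
    by case/andP => ba /eqP.
  by rewrite ba.
move=> ag bg ab; have d0 : d < size g by apply: ltnW.
rewrite !index_swap_at // swap_idx_ltE.
- by rewrite !index_nthE // xpair_eqE.
- by apply: contraTneq ab => /(index_inj 0 ag bg) ->; rewrite ltnn.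
- rewrite !index_nthE //; apply: contraTN ab => /andP[/eqP -> /eqP ->].
  by rewrite -leqNgt ltnW.
Qed.

End AdjacentSwap.

Definition descent (g : seq nat) d := (d.+1 < size g) && (nth 0 g d.+1 < nth 0 g d).

Lemma perm_swap_at n g d : is_perm n g -> d.+1 < n -> is_perm n (swap_at g d).
Proof.
move=> pg dn; have ug := perm_iota_uniq pg; have sg := perm_iota_size pg.
apply: uniq_perm; rewrite ?iota_uniq ?uniq_swap_at ?sg // => v.
by rewrite mem_swap_at ?sg // (perm_iota_mem _ pg) mem_iota; lia.
Qed.

Lemma covers_swap_at n g d : is_perm n g -> descent g d -> covers n g (swap_at g d).
Proof.
move=> pg /andP[dg desc]; have ug := perm_iota_uniq pg.
have dn : d.+1 < n by rewrite -(perm_iota_size pg).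
have inv_g := inv_swap_at dg ug desc; set q := (nth 0 g d.+1, nth 0 g d) in inv_g.
have gq : inv_set g q by exists d, d.+1.
split; [exact: perm_swap_at | exact: pg | split | ].
- by move=> p /inv_g[].
- by move=> eg; have /inv_g[] : inv_set (swap_at g d) q by rewrite eg.
move=> z pz [lez nez] [lzg nzg].
have [zq | zNq] := classic (inv_set z q).
- apply: nzg; apply: (inv_set_inj pz pg) => p; split; first exact: lzg.
  by have [-> | pq gp] := classic (p = q); last by apply/lez/inv_g.
- apply: nez; apply: (inv_set_inj (perm_swap_at pg dn) pz) => p; split; first exact: lez.
  by move=> zp; apply/inv_g; split; [exact: lzg | move=> pq; apply: zNq; rewrite -pq].
Qed.

Lemma nth_ascent (g : seq nat) e : uniq g -> e.+1 < size g -> ~~ descent g e ->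
  nth 0 g e < nth 0 g e.+1.
Proof.
move=> ug eg; rewrite /descent eg /= -leqNgt leq_eqVlt => /orP[/eqP ee|] //.
by have := nth_uniq 0 (ltnW eg) eg ug; rewrite ee eqxx; lia.
Qed.

Lemma descent_runs_sorted (g : seq nat) d : uniq g -> (forall e, descent g e -> e = d) ->
  sorted ltn (take d.+1 g) /\ sorted ltn (drop d.+1 g).
Proof.
move=> ug only_d; have asc e : e.+1 < size g -> e != d -> nth 0 g e < nth 0 g e.+1.
  by move=> eg ed; apply: nth_ascent => //; apply: contra ed => /only_d ->.
split; apply/(sortedP 0) => e.
- rewrite size_take => es; rewrite !nth_take; [apply: asc | ..];
    by move: es; case: ifP; lia.
- rewrite size_drop !nth_drop => ?; rewrite addnS; apply: asc; lia.
Qed.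

Lemma no_descent_no_inv (g : seq nat) p : uniq g -> (forall e, ~~ descent g e) -> ~ inv_set g p.
Proof.
move=> ug asc [i [j [ij jg ji _]]].
have sg : sorted ltn g by apply/(sortedP 0) => e eg; apply: nth_ascent.
have := sorted_ltn_nth ltn_trans 0 sg i j (ltn_trans ij jg) jg ij; lia.
Qed.

Section JoinIrreducible.

Variables (n : nat) (g : seq nat).
Hypothesis gJ : join_irreducible n g.

Lemma join_irreducible_descent : exists d, descent g d.
Proof.
case: gJ => pg [y [[py _ [yg Nyg] _] _]]; apply: NNPP => Nd; apply: Nyg.
have asc e : ~~ descent g e by apply/negP => de; apply: Nd; exists e.
apply: (inv_set_inj py pg) => p; split; first exact: yg.
by move/(no_descent_no_inv (perm_iota_uniq pg) asc).
Qed.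

Lemma join_irreducible_descent_uniq d e : descent g d -> descent g e -> d = e.
Proof.
case: gJ => pg [y [_ uniq_cover]] dd de.
have ug := perm_iota_uniq pg; have /andP[dg ddesc] := dd; have /andP[eg edesc] := de.
have same : swap_at g d = swap_at g e.
  by rewrite (uniq_cover _ (covers_swap_at pg dd)) (uniq_cover _ (covers_swap_at pg de)).
apply: NNPP => ne.
have : inv_set (swap_at g e) (nth 0 g d.+1, nth 0 g d).
  apply/(inv_swap_at eg ug edesc); split; first by exists d, d.+1.
  by case=> /eqP; rewrite nth_uniq // => /eqP[].
by rewrite -same => /(inv_swap_at dg ug ddesc)[_]; apply.
Qed.

End JoinIrreducible.

Lemma sorted_filter_iota n (P : pred nat) (s : seq nat) : sorted ltn s ->
  (forall v, (v \in s) = (1 <= v <= n) && P v) -> s = [seq v <- iota 1 n | P v].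
Proof.
move=> ss sP; apply: (irr_sorted_eq ltn_trans ltnn) => //.
  exact/sorted_filter/iota_ltn_sorted/ltn_trans.
by move=> v; rewrite sP mem_filter mem_iota andbC; case: (P v) => //=; lia.
Qed.

Lemma cat_sorted_jperm n s t : is_perm n (s ++ t) -> sorted ltn s -> sorted ltn t ->
  s ++ t = jperm n (fun v => v \in t).
Proof.
move=> pst ss st; have := perm_iota_uniq pst; rewrite cat_uniq => /and3P[_ /hasPn disj _].
have memn v : (v \in s ++ t) = (1 <= v <= n) := perm_iota_mem _ pst.
congr (_ ++ _); apply: sorted_filter_iota => // v; rewrite -memn mem_cat.
- by case vt: (v \in t); rewrite /= ?orbT ?orbF ?andbT ?andbF //; apply/negbTE/disj.
- by case: (v \in t); rewrite ?orbT ?andbF.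
Qed.

Lemma join_irreducible_jperm n g : join_irreducible n g -> exists A, assoc_subset n g A.
Proof.
move=> gJ; have pg := gJ.1; have ug := perm_iota_uniq pg.
have [d dd] := join_irreducible_descent gJ; have /andP[dg ddesc] := dd.
have [take_sorted drop_sorted] :=
  descent_runs_sorted ug (fun e de => join_irreducible_descent_uniq gJ de dd).
exists (fun v => v \in drop d.+1 g); split; last first.
  by rewrite -{1}(cat_take_drop d.+1 g) (@cat_sorted_jperm n) ?cat_take_drop.
have := ug; rewrite -[X in uniq X](cat_take_drop d.+1 g) cat_uniq => /and3P[_ /hasPn disj _].
exists (nth 0 g d.+1), (nth 0 g d); split => //; rewrite -?(perm_iota_mem _ pg) ?mem_nth //.
- exact: ltnW.
- have -> : nth 0 g d.+1 = nth 0 (drop d.+1 g) 0 by rewrite nth_drop addn0.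
  by rewrite mem_nth // size_drop subn_gt0.
- apply: contraL (_ : nth 0 g d \in take d.+1 g) => [/disj // | ].
  by rewrite -(@nth_take d.+1) // mem_nth // size_take dg.
Qed.

Lemma jperm_is_perm n A : is_perm n (jperm n A).
Proof.
by rewrite /is_perm /jperm perm_catC (perm_filterC A).
Qed.

Lemma jperm_uniq n A : uniq (jperm n A).
Proof. exact/perm_iota_uniq/jperm_is_perm. Qed.

Lemma size_jperm n A : size (jperm n A) = n.
Proof. exact/perm_iota_size/jperm_is_perm. Qed.

Lemma mem_jperm n A v : (v \in jperm n A) = (1 <= v <= n).
Proof. exact/perm_iota_mem/jperm_is_perm. Qed.

Lemma jperm_eq_in n (A B : pred nat) : (forall v, 1 <= v <= n -> A v = B v) ->
  jperm n A = jperm n B.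
Proof.
move=> AB; rewrite /jperm; congr (_ ++ _); apply: eq_in_filter => v;
  rewrite mem_iota => vn; rewrite AB //; lia.
Qed.

Lemma valid_subset_eq_in n (A B : pred nat) : (forall v, 1 <= v <= n -> A v = B v) ->
  valid_subset n A -> valid_subset n B.
Proof. by move=> AB [a [b [ra rb Aa Ab ab]]]; exists a, b; rewrite -!AB. Qed.

Lemma sorted_ltn_index_lt (s : seq nat) a b : sorted ltn s -> a \in s -> b \in s ->
  (index a s < index b s) = (a < b).
Proof.
move=> ss as_ bs; apply/idP/idP; first exact: (sorted_ltn_index ltn_trans ss).
case: (ltngtP (index a s)) => //.
  by move/(sorted_ltn_index ltn_trans ss _ _ bs as_); lia.
by move/(index_inj 0 as_ bs) ->; rewrite ltnn.
Qed.

Lemma jperm_index_lt n A a b : 1 <= a <= n -> 1 <= b <= n ->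
  (index a (jperm n A) < index b (jperm n A)) = if A a == A b then a < b else A b.
Proof.
move=> an bn; set L := [seq v <- iota 1 n | ~~ A v]; set R := [seq v <- iota 1 n | A v].
have sorted_run P : sorted ltn [seq v <- iota 1 n | P v].
  exact/sorted_filter/iota_ltn_sorted/ltn_trans.
have memL v : 1 <= v <= n -> (v \in L) = ~~ A v by rewrite mem_filter mem_iota; lia.
have memR v : 1 <= v <= n -> (v \in R) = A v by rewrite mem_filter mem_iota; lia.
rewrite /jperm -/L -/R !index_cat !memL //.
case Aa: (A a); case Ab: (A b) => /=.
- by rewrite ltn_add2l sorted_ltn_index_lt ?memR ?sorted_run.
- by apply/negbTE; rewrite -leqNgt (leq_trans (ltnW _) (leq_addr _ _)) // index_mem memL ?Ab.
- by rewrite (leq_trans _ (leq_addr _ _)) // index_mem memL ?Aa.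
- by rewrite sorted_ltn_index_lt ?memL ?Aa ?Ab ?sorted_run.
Qed.

Definition sandwich_coherent n (U A : pred nat) := forall a b c,
  1 <= a -> a < b -> b < c -> c <= n -> A a = A c -> A b != A a -> A b = U b.

Section JpermPatterns.

Variables (n : nat) (U A : pred nat).
Local Notation s := (jperm n A).

Lemma nth_jperm_range i : i < n -> 1 <= nth 0 s i <= n.
Proof. by move=> ilt; rewrite -(mem_jperm _ A) mem_nth ?size_jperm. Qed.

Lemma nth_index_jperm v : 1 <= v <= n -> nth 0 s (index v s) = v.
Proof. by move=> vn; rewrite nth_index ?mem_jperm. Qed.

Lemma jperm_bar213 : contains_bar213 U s <->
  exists a b c, [/\ 1 <= a, a < b, b < c, c <= n & [&& A a, ~~ A b, A c & U b]].
Proof.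
split=> [[i [j [k [ij jk ks /andP[ba ac] Ub]]]] | [a [b [c [a1 ab bc cn /and4P[Aa Ab Ac Ub]]]]]].
- rewrite size_jperm in ks; have jn := ltn_trans jk ks; have in_ := ltn_trans ij jn.
  exists (nth 0 s j), (nth 0 s i), (nth 0 s k); split; rewrite ?Ub ?andbT; try lia.
  + by have := nth_jperm_range jn; lia.
  + by have := nth_jperm_range ks; lia.
  have := jperm_index_lt A (nth_jperm_range in_) (nth_jperm_range jn).
  have := jperm_index_lt A (nth_jperm_range jn) (nth_jperm_range ks).
  rewrite !index_uniq ?size_jperm ?jperm_uniq // ij jk.
  by case: (A _) (A _) (A _) => [] [] [] /=; lia.
- exists (index b s), (index a s), (index c s).
  rewrite !nth_index_jperm ?Ub; try lia; split => //; last by rewrite ab bc.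
  + by rewrite jperm_index_lt ?Aa ?(negbTE Ab) //; lia.
  + by rewrite jperm_index_lt ?Aa ?Ac //=; lia.
  + by rewrite index_mem mem_jperm; lia.
Qed.

Lemma jperm_13under2 : contains_13under2 U s <->
  exists a b c, [/\ 1 <= a, a < b, b < c, c <= n & [&& ~~ A a, A b, ~~ A c & ~~ U b]].
Proof.
split=> [[i [j [k [ij jk ks /andP[ac cb] Ub]]]] | [a [b [c [a1 ab bc cn /and4P[Aa Ab Ac Ub]]]]]].
- rewrite size_jperm in ks; have jn := ltn_trans jk ks; have in_ := ltn_trans ij jn.
  exists (nth 0 s i), (nth 0 s k), (nth 0 s j); split; rewrite ?Ub ?andbT; try lia.
  + by have := nth_jperm_range in_; lia.
  + by have := nth_jperm_range jn; lia.
  have := jperm_index_lt A (nth_jperm_range in_) (nth_jperm_range jn).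
  have := jperm_index_lt A (nth_jperm_range jn) (nth_jperm_range ks).
  rewrite !index_uniq ?size_jperm ?jperm_uniq // ij jk.
  by case: (A _) (A _) (A _) => [] [] [] /=; lia.
- exists (index a s), (index c s), (index b s).
  rewrite !nth_index_jperm ?Ub; try lia; split => //; last by rewrite ab bc.
  + by rewrite jperm_index_lt ?(negbTE Aa) ?(negbTE Ac) //=; lia.
  + by rewrite jperm_index_lt ?(negbTE Ac) ?Ab //; lia.
  + by rewrite index_mem mem_jperm; lia.
Qed.

Lemma jperm_avoidsP :
  ~ contains_bar213 U s /\ ~ contains_13under2 U s <-> sandwich_coherent n U A.
Proof.
rewrite jperm_bar213 jperm_13under2; split.
- case=> no213 no132 a b c a1 ab bc cn; case Aa: (A a) => /esym Ac; case Ab: (A b) => // _.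
  + apply/esym/negbTE/negP => Ub; apply: no213.
    by exists a, b, c; rewrite Aa Ab Ac Ub.
  + apply/esym/negP => /negP Ub; apply: no132.
    by exists a, b, c; rewrite Aa Ab Ac Ub.
- move=> coh; split=> -[a [b [c [a1 ab bc cn /and4P[Aa Ab Ac Ub]]]]].
  + by move: (coh a b c a1 ab bc cn); rewrite Aa Ac (negbTE Ab) Ub => /(_ erefl isT).
  + move: (coh a b c a1 ab bc cn).
    by rewrite (negbTE Aa) (negbTE Ac) Ab (negbTE Ub) => /(_ erefl isT).
Qed.

End JpermPatterns.

Section AklValues.

Variables (n : nat) (U : pred nat) (k l : nat).

Lemma Akl_diag v : Akl n U k k v = (1 <= v <= k).
Proof. by rewrite /Akl eqxx. Qed.

Hypothesis kl : k < l.

Lemma Akl_low v : 1 <= v <= k -> Akl n U k l v = ~~ U k.+1.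
Proof.
rewrite /Akl /Ukl (_ : (k == l) = false); last lia.
by case: (U k.+1); case: (U l); case: (U v) => /=; lia.
Qed.

Lemma Akl_mid v : k < v <= l -> Akl n U k l v = U v.
Proof.
rewrite /Akl /Ukl (_ : (k == l) = false); last lia.
by case: (U k.+1); case: (U l); case: (U v) => /=; lia.
Qed.

Lemma Akl_high v : l < v <= n -> Akl n U k l v = ~~ U l.
Proof.
rewrite /Akl /Ukl (_ : (k == l) = false); last lia.
by case: (U k.+1); case: (U l); case: (U v) => /=; lia.
Qed.

End AklValues.

Lemma sandwich_coherent_Akl n U k l : k <= l -> sandwich_coherent n U (Akl n U k l).
Proof.
rewrite leq_eqVlt => /orP[/eqP <- | kl] a b c a1 ab bc cn.
  by rewrite !Akl_diag; lia.
case: (leqP b k) => [bk | kb].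
  by rewrite (Akl_low _ _ kl (v := a)) ?(Akl_low _ _ kl (v := b)) ?eqxx //; lia.
case: (leqP b l) => [bl | lb].
  by rewrite (Akl_mid _ _ kl (v := b)) //; lia.
by rewrite (Akl_high U kl (v := b)) ?(Akl_high U kl (v := c)) ?eqxx //; lia.
Qed.

Section CoherentShape.

Variables (n : nat) (U A : pred nat) (k l : nat).
Hypotheses (A_valid : valid_subset n A) (A_coh : sandwich_coherent n U A).
Hypotheses (k_pos : 0 < k) (k_lt : k < n) (l_lt : l < n).
Hypotheses (A_low : forall v, 1 <= v <= k -> A v = A 1)
           (A_high : forall v, l < v <= n -> A v = A n).
Hypotheses (A_k1 : A k.+1 != A 1) (A_l : A l != A n).

Lemma first_change_le_last : k <= l.
Proof.
rewrite leqNgt; apply/negP => lk; move: A_k1.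
by rewrite A_high -?(A_high (v := k)) ?A_low ?eqxx //; lia.
Qed.

Lemma coherent_mid w : k < w <= l -> A w = U w.
Proof.
move=> kwl.
have [x [x1 xw Axw]] : exists x, [/\ 1 <= x, x < w & A x != A w].
  have [A1w | A1w] := eqVneq (A 1) (A w); last by exists 1; split => //; lia.
  exists k.+1; rewrite -A1w; split => //.
  by rewrite ltn_neqAle; apply/andP; split; [apply: (contraNneq _ A_k1) => ->|]; lia.
have [y [wy yn Ayw]] : exists y, [/\ w < y, y <= n & A y != A w].
  have [Anw | Anw] := eqVneq (A n) (A w); last by exists n; split => //; lia.
  exists l; rewrite -Anw; split => //; last lia.
  by rewrite ltn_neqAle; apply/andP; split; [apply: (contraNneq _ A_l) => <-|]; lia.
apply: (A_coh x1 xw wy yn); last by rewrite eq_sym.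
by move: Axw Ayw; case: (A x) (A y) (A w) => [] [] [].
Qed.

Lemma coherent_eq_Akl v : 1 <= v <= n -> A v = Akl n U k l v.
Proof.
move=> vn; have kl := first_change_le_last.
have [kl_eq | k_ne_l] := eqVneq k l.
  subst l.
  have A1 : A 1.
    case: A_valid => a [b [an bn Aa Ab ab]]; apply: (contraNT _ Ab) => A1.
    have ka : k < a by apply: (contraTT _ Aa); rewrite -leqNgt => ak; rewrite A_low //; lia.
    by rewrite A_high -?(A_high (v := a)) //; lia.
  have An : ~~ A n by move: A_k1; rewrite A_high ?A1 //; lia.
  rewrite Akl_diag; case: (leqP v k) => vk; first by rewrite A_low ?A1; lia.
  by rewrite A_high ?(negbTE An) //; lia.
have {}kl : k < l by rewrite ltn_neqAle k_ne_l.
case: (leqP v k) => vk.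
  by rewrite Akl_low ?A_low -?(coherent_mid (w := k.+1)) //; lia.
case: (leqP v l) => vl; first by rewrite Akl_mid ?coherent_mid //; lia.
by rewrite Akl_high ?A_high -?(coherent_mid (w := l)) //; lia.
Qed.

End CoherentShape.

Lemma coherent_Akl_shape n U A : valid_subset n A -> sandwich_coherent n U A ->
  exists k l, [/\ 1 <= k, k <= l, l <= n.-1 & forall v, 1 <= v <= n -> A v = Akl n U k l v].
Proof.
move=> A_valid A_coh; have [a [b [an bn Aa Ab _]]] := A_valid.
have differs c : exists2 x, 1 <= x <= n & A x != A c.
  by case: (A c); [exists b; rewrite ?(negbTE Ab) | exists a; rewrite ?Aa].
have exP : exists k, (k < n) && (A k.+1 != A 1).
  by have [x xn Ax] := differs 1; exists x.-1; rewrite prednK; lia.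
have exQ : exists l, (l < n) && (A l != A n).
  have [x xn Ax] := differs n; exists x; rewrite Ax andbT ltn_neqAle.
  by apply/andP; split; [apply: (contraNneq _ Ax) => ->|]; lia.
case: (ex_minnP exP) => k /andP[kn Ak1] k_min.
have Q_bound l : (l < n) && (A l != A n) -> l <= n by case/andP => /ltnW.
case: (ex_maxnP exQ Q_bound) => l /andP[ln Al] l_max.
have k_pos : 0 < k by case: k {kn k_min} Ak1 => //; rewrite eqxx.
have A_low v : 1 <= v <= k -> A v = A 1.
  move=> vk; apply/eqP; apply: (contraTT _ vk) => Av.
  by have := k_min v.-1; rewrite prednK ?Av; lia.
have A_high v : l < v <= n -> A v = A n.
  move=> vl; apply/eqP; apply: (contraTT _ vl) => Av.
  have vn : v < n by rewrite ltn_neqAle; apply/andP; split; [apply: (contraNneq _ Av) => ->|]; lia.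
  by have := l_max v; rewrite vn Av; lia.
exists k, l; split; [lia | | lia | ].
- exact: first_change_le_last k_pos kn ln A_low A_high Ak1 Al.
- exact: coherent_eq_Akl A_valid A_coh k_pos kn ln A_low A_high Ak1 Al.
Qed.

Theorem proposition9p3 (n : nat) (U : pred nat) (g : seq nat) :
  join_irreducible n g ->
  ((~ contains_bar213 U g /\ ~ contains_13under2 U g) <->
   exists k l, [/\ 1 <= k, k <= l, l <= n.-1 & assoc_subset n g (Akl n U k l)]).
Proof.
move=> gJ; have [A [A_valid ->]] := join_irreducible_jperm gJ; split.
- move/jperm_avoidsP => A_coh.
  have [k [l [k1 kl ln AE]]] := coherent_Akl_shape A_valid A_coh.
  exists k, l; split => //; split; first exact: valid_subset_eq_in AE A_valid.
  exact: jperm_eq_in AE.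
- case=> k [l [_ kl _ [_ ->]]]; apply/jperm_avoidsP.
  exact: sandwich_coherent_Akl.
Qed.
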